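(* For every positive integer $k$, \[ \sum_{\lfloor k/2\rfloor<i+t\le k}B_{2t}\,2^{2t}\binom{2k+2}{2t,\;2i+1,\;2k-2t-2i+1}=(k+1)\left(2^{2k}-(-1)^k\binom{2k}{k}\right), \] where the sum ranges over all pairs of nonnegative integers $i,t$ with $\lfloor k/2\rfloor<i+t\le k$.
   Context: The Bernoulli numbers $B_m$ ($m\ge 0$) are defined by $\dfrac{x}{e^x-1}=\sum_{m=0}^\infty B_m\dfrac{x^m}{m!}$. The trinomial coefficient is $\binom{n}{r_1,r_2,r_3}=\dfrac{n!}{r_1!\,r_2!\,r_3!}$ for nonnegative integers $r_1+r_2+r_3=n$. *)

From mathcomp Require Import all_boot all_order all_algebra.
Set Implicit Arguments. Unset Strict Implicit. Unset Printing Implicit Defensive.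
Import Order.TTheory GRing.Theory Num.Theory.
Local Open Scope ring_scope.

(* bern_list m = [:: B_0; B_1; ...; B_m], using the recurrence
   B_0 = 1, B_m = - 1/(m+1) * sum_{j<m} C(m+1,j) B_j  (m >= 1),
   which is equivalent to x/(e^x-1) = sum B_m x^m/m!  (so B_1 = -1/2). *)
Fixpoint bern_list (m : nat) : seq rat :=
  match m with
  | 0%N => [:: 1]
  | m'.+1 =>
      let s := bern_list m' in
      rcons s (- (m'.+2%:R)^-1 *
                 \sum_(j < m'.+1) ('C(m'.+2, j))%:R * nth 0 s j)
  end.

Definition bernoulli (m : nat) : rat := nth 0 (bern_list m) m.

(* trinomial coefficient n!/(r1! r2! r3!) (used only when r1+r2+r3 = n) *)
Definition trinomial (n r1 r2 r3 : nat) : nat :=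
  (n`! %/ (r1`! * r2`! * r3`!))%N.

From mathcomp Require Import all_boot all_order all_algebra.
From mathcomp Require Import ring zify.
Set Implicit Arguments. Unset Strict Implicit. Unset Printing Implicit Defensive.
Import Order.TTheory GRing.Theory Num.Theory.
Local Open Scope ring_scope.

(* Write B(x) = x/(e^x - 1) = sum B_m x^m/m!.  Since B(2x)(e^(2x) - 1) = 2x, multiplying by
   e^(-x) gives B(2x)(e^x - e^(-x)) = 2x e^(-x); comparing coefficients of x^(2s+1) yields
   sum_t B_(2t) 2^(2t) C(2s+1, 2t) = 2s+1.  These identities are handled as congruences
   of polynomials modulo X^N.  On the combinatorial side the trinomial factors as
   C(2k+2, 2s+1) C(2s+1, 2t) with s = i + t, so the sum collapses to
   (2k+2) sum_(k/2 < s <= k) C(2k+1, 2s), a half of an odd row of Pascal's triangle,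
   which Pascal's rule and the symmetry of the row 2k evaluate. *)

Lemma size_bern_list m : size (bern_list m) = m.+1.
Proof. by elim: m => //= m IH; rewrite size_rcons IH. Qed.

Lemma nth_bern_list m j : (j <= m)%N -> nth 0 (bern_list m) j = bernoulli j.
Proof.
elim: m => [|m IH]; first by rewrite leqn0 => /eqP ->.
rewrite leq_eqVlt => /orP[/eqP -> //|]; rewrite ltnS => le_jm /=.
by rewrite nth_rcons size_bern_list ltnS le_jm IH.
Qed.

Lemma bernoulli_rec m : bernoulli m.+1 =
  - (m.+2%:R)^-1 * \sum_(j < m.+1) 'C(m.+2, j)%:R * bernoulli j.
Proof.
rewrite /bernoulli /= nth_rcons size_bern_list ltnn eqxx.
by congr (_ * _); apply: eq_bigr => j _; rewrite nth_bern_list // -ltnS.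
Qed.

Lemma bernoulli_binomial_sum n : (1 < n)%N ->
  \sum_(j < n) 'C(n, j)%:R * bernoulli j = 0.
Proof.
case: n => [//|[//|m]] _; rewrite big_ord_recr /= bernoulli_rec binSn.
have nz_m2 : (m.+2%:R : rat) != 0 by rewrite pnatr_eq0.
by rewrite mulrA mulrN mulfV // mulN1r subrr.
Qed.

Section TruncatedPowerSeries.
Variable R : fieldType.

Definition eqmodX N (p q : {poly R}) := 'X^N %| p - q.

Lemma eqmodXP N (p q : {poly R}) :
  reflect (forall n, (n < N)%N -> p`_n = q`_n) (eqmodX N p q).
Proof.
apply: (iffP idP) => [/dvdpP[r def_pq] n ltnN | eq_pq].
  by apply/eqP; rewrite -subr_eq0 -coefB def_pq coefMXn ltnN.
apply/dvdpP; exists (drop_poly N (p - q)).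
rewrite -{1}(poly_take_drop N (p - q)) addrC -[RHS]addr0; congr (_ + _).
apply/polyP => i; rewrite coef_take_poly coef0 coefB.
by case: ifP => // /eq_pq ->; rewrite subrr.
Qed.

Lemma eqmodX_trans N (p q r : {poly R}) : eqmodX N p q -> eqmodX N q r -> eqmodX N p r.
Proof. by move=> pq qr; rewrite /eqmodX -(subrKA q) dvdp_add. Qed.

End TruncatedPowerSeries.

Section ExponentialGeneratingPolynomials.
Variables (R : numFieldType) (N : nat).

Definition egf (a : nat -> R) : {poly R} := \poly_(i < N) (a i / i`!%:R).

Lemma invf_fact_binomial n j : (j <= n)%N ->
  (j`!%:R)^-1 * ((n - j)`!%:R)^-1 = 'C(n, j)%:R / n`!%:R :> R.
Proof.
move=> le_jn; rewrite -(bin_fact le_jn) !natrM.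
have nz_fact m : (m`!%:R : R) != 0 by rewrite pnatr_eq0 -lt0n fact_gt0.
have nz_bin : ('C(n, j)%:R : R) != 0 by rewrite pnatr_eq0 -lt0n bin_gt0.
by field; rewrite !nz_fact nz_bin.
Qed.

Lemma coef_egfM a b n : (n < N)%N ->
  (egf a * egf b)`_n = (\sum_(j < n.+1) 'C(n, j)%:R * (a j * b (n - j)%N)) / n`!%:R.
Proof.
move=> ltnN; rewrite coefM mulr_suml; apply: eq_bigr => -[j /=]; rewrite ltnS => le_jn _.
rewrite !coef_poly (leq_ltn_trans (leq_subr j n) ltnN) (leq_ltn_trans _ ltnN) //.
by rewrite mulrACA invf_fact_binomial //; ring.
Qed.

Lemma egfB a b : egf a - egf b = egf (fun i => a i - b i).
Proof. by apply/polyP => i; rewrite coefB !coef_poly; case: ifP; rewrite ?subr0 // mulrBl. Qed.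

Definition exp_egf c := egf (fun i => c ^+ i).

Lemma exp_egfD c d : eqmodX N (exp_egf c * exp_egf d) (exp_egf (c + d)).
Proof.
apply/eqmodXP => n ltnN; rewrite coef_egfM // coef_poly ltnN addrC exprDn.
by congr (_ / _); apply: eq_bigr => j _; rewrite mulr_natl mulrC.
Qed.

Lemma exp_egf0 : eqmodX N (exp_egf 0) 1.
Proof.
apply/eqmodXP => n ltnN; rewrite coef_poly ltnN coef1 expr0n.
by case: n {ltnN} => [|n]; rewrite ?invr1 ?mulr1 ?mul0r.
Qed.

End ExponentialGeneratingPolynomials.

Definition bernoulli_egf N (c : rat) := egf N (fun i => c ^+ i * bernoulli i).

Lemma bernoulli_egf_exp N c :
  eqmodX N (bernoulli_egf N c * (exp_egf N c - 1)) (c *: 'X).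
Proof.
apply/eqmodXP => n ltnN.
rewrite mulrBr mulr1 coefB coef_egfM // coef_poly ltnN coefZ coefX.
rewrite big_ord_recr /= binn subnn expr0 mulr1 mulr1n.
have -> : \sum_(j < n) 'C(n, j)%:R * (c ^+ j * bernoulli j * c ^+ (n - j)) =
          c ^+ n * \sum_(j < n) 'C(n, j)%:R * bernoulli j.
  rewrite mulr_sumr; apply: eq_bigr => j _.
  have cjn : c ^+ j * c ^+ (n - j) = c ^+ n by rewrite -exprD subnKC // ltnW.
  by rewrite -cjn; ring.
rewrite mul1r mulrDl addrK.
case: n ltnN => [|[|n]] _.
- by rewrite big_ord0 !mulr0 mul0r.
- by rewrite big_ord_recl big_ord0 addr0 expr1 mul1r /bernoulli /= invr1 !mulr1.
- by rewrite bernoulli_binomial_sum // mulr0 mul0r mulr0.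
Qed.

Lemma bernoulli_egf2_sinh N :
  eqmodX N (bernoulli_egf N 2 * (exp_egf N 1 - exp_egf N (-1)))
           (2 *: 'X * exp_egf N (-1)).
Proof.
set D := bernoulli_egf N 2; set E1 := exp_egf N 1; set Em := exp_egf N (-1).
pose E2 := exp_egf N (2 : rat).
have DE2 : eqmodX N (D * (E2 - 1)) (2 *: 'X) := bernoulli_egf_exp N 2.
have E1E1 : eqmodX N (E1 * E1) E2 := exp_egfD N 1 1.
have EmE1 : eqmodX N (Em * E1) 1.
  by apply: eqmodX_trans (exp_egfD N (-1) 1) _; rewrite addNr; apply: exp_egf0.
rewrite /eqmodX in DE2 E1E1 EmE1 *.
rewrite (_ : _ - _ = Em * (D * (E2 - 1) - 2 *: 'X) + Em * D * (E1 * E1 - E2)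
                     - D * E1 * (Em * E1 - 1)); last by ring.
by rewrite dvdp_sub ?dvdp_add ?dvdp_mull.
Qed.

Lemma bernoulli_pow2_binomial_sum m :
  \sum_(j < m.+2) 'C(m.+1, j)%:R * (2 ^+ j * bernoulli j * (1 - (-1) ^+ (m.+1 - j)))
  = 2 * m.+1%:R * (-1) ^+ m.
Proof.
have /eqmodXP/(_ m.+1 (ltnSn _)) := bernoulli_egf2_sinh m.+2.
rewrite /exp_egf egfB coef_egfM // -scalerAl coefZ coefXM coef_poly ltnW //=.
under eq_bigr do rewrite expr1n.
rewrite factS natrM => sum_eq.
have nz_fact : (m`!%:R : rat) != 0 by rewrite pnatr_eq0 -lt0n fact_gt0.
have nz_m1 : (m.+1%:R : rat) != 0 by rewrite pnatr_eq0.
rewrite -[LHS](divfK (mulf_neq0 nz_m1 nz_fact)) sum_eq.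
by field.
Qed.

Lemma big_ord_double (V : nmodType) n (F : nat -> V) :
  \sum_(j < 2 * n) F j = \sum_(t < n) (F (2 * t)%N + F (2 * t).+1).
Proof.
elim: n => [|n IH]; first by rewrite !big_ord0.
by rewrite mulnSr addn2 !big_ord_recr /= IH addrA.
Qed.

Lemma bernoulli_even_binomial_sum s :
  \sum_(t < s.+1) bernoulli (2 * t) * 2 ^+ (2 * t) * 'C((2 * s).+1, 2 * t)%:R
  = (2 * s).+1%:R.
Proof.
have := bernoulli_pow2_binomial_sum (2 * s).
pose F j := 'C((2 * s).+1, j)%:R * (2 ^+ j * bernoulli j * (1 - (-1) ^+ ((2 * s).+1 - j))).
rewrite -addn2 -mulnSr (big_ord_double _ F) exprM sqrrN !expr1n mulr1 /F.
under eq_bigr => t _.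
  have le_ts : (t <= s)%N by rewrite -ltnS.
  rewrite subSS -mulnBr (_ : ((2 * s).+1 - 2 * t = (2 * (s - t)).+1)%N); last by lia.
  rewrite exprS !(exprM (-1)) sqrrN !expr1n subrr !mulr0 addr0.
  over.
move=> sum_eq; apply: (mulfI (_ : (2 : rat) != 0)) => //.
rewrite -{}sum_eq mulr_sumr; apply: eq_bigr => t _; ring.
Qed.

Lemma trinomial_binomial a b c :
  trinomial (a + b + c) a b c = ('C(a + b + c, a + b) * 'C(a + b, a))%N.
Proof.
rewrite /trinomial -{1}(bin_fact (leq_addr c (a + b))) addKn.
rewrite -(bin_fact (leq_addr b a)) addKn.
rewrite (_ : _ * _ = 'C(a + b + c, a + b) * 'C(a + b, a) * (a`! * b`! * c`!))%N.
  by rewrite mulnK // !muln_gt0 !fact_gt0.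
by rewrite !mulnA.
Qed.

Lemma big_ord_antidiagonal (V : nmodType) n (P : pred nat) (h : nat -> nat -> V) :
    (forall s, P s -> s <= n)%N ->
  \sum_(i < n.+1) \sum_(t < n.+1 | P (i + t)%N) h (i + t)%N t =
  \sum_(s < n.+1 | P s) \sum_(t < s.+1) h s t.
Proof.
move=> Pn.
under [RHS]eq_bigr => s Ps do rewrite (big_ord_widen n.+1 (h s)) ?ltnS ?Pn //.
rewrite (exchange_big_dep xpredT) //= [RHS](exchange_big_dep xpredT) //=.
apply: eq_bigr => t _; pose F s := h s t.
rewrite -(big_mkord (fun i => P (i + t)%N) (fun i => F (i + t)%N)).
rewrite -(big_geq_mkord t n.+1 P F) -[in RHS](add0n t) big_addn.
rewrite (big_nat_widen 0 (n.+1 - t) n.+1) ?leq_subr //.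
apply: eq_bigl => i; case Pit: (P (i + t)%N) => //=.
by rewrite ltn_subRL addnC ltnS Pn.
Qed.

Lemma sum_binomial n : (\sum_(0 <= i < n.+1) 'C(n, i) = 2 ^ n)%N.
Proof.
rewrite big_mkord (_ : 2 ^ n = (1 + 1) ^ n)%N // expnDn.
by apply: eq_bigr => i _; rewrite !exp1n !muln1.
Qed.

Lemma sum_binomial_upper_half k :
  (2 * \sum_(k.+1 <= j < (2 * k).+1) 'C(2 * k, j) + 'C(2 * k, k) = 2 ^ (2 * k))%N.
Proof.
have lower_upper : (\sum_(0 <= j < k) 'C(2 * k, j) =
                    \sum_(k.+1 <= j < (2 * k).+1) 'C(2 * k, j))%N.
  rewrite -(add0n k.+1) big_addn subSS (_ : 2 * k - k = k)%N; last by lia.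
  rewrite big_nat_rev; apply: eq_big_nat => j /andP[_ lt_jk].
  rewrite add0n -bin_sub; last by lia.
  by congr 'C(_, _); lia.
rewrite -sum_binomial [RHS](big_cat_nat (n := k)) //=; last by lia.
rewrite [X in _ = _ + X]big_ltn ?lower_upper; lia.
Qed.

Lemma sum_binomial_even_succ n a d :
  (\sum_(a.+1 <= s < a.+1 + d) 'C(n.+1, 2 * s) =
   \sum_((2 * a).+1 <= j < (2 * (a + d)).+1) 'C(n, j))%N.
Proof.
elim: d => [|d IH]; first by rewrite !addn0 !big_geq.
rewrite !addnS big_nat_recr ?leq_addr //= IH.
rewrite (_ : (2 * (a + d).+1).+1 = (2 * (a + d)).+3)%N; last by lia.
rewrite [in RHS]big_nat_recr /=; last by lia.
rewrite [in RHS]big_nat_recr /=; last by lia.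
by rewrite (_ : 2 * (a.+1 + d) = (2 * (a + d)).+2)%N ?binS; lia.
Qed.

Lemma sum_binomial_odd_row_upper (R : comPzRingType) k :
  2 * (\sum_(k./2.+1 <= s < k.+1) 'C((2 * k).+1, 2 * s))%N%:R
  = 2 ^+ (2 * k) - (-1) ^+ k * 'C(2 * k, k)%:R :> R.
Proof.
have half_k := odd_double_half k; rewrite -mul2n in half_k.
rewrite (_ : k.+1 = k./2.+1 + (k - k./2))%N; last by lia.
rewrite sum_binomial_even_succ (_ : k./2 + (k - k./2) = k)%N; last by lia.
have upper : 2 * (\sum_(k.+1 <= j < (2 * k).+1) 'C(2 * k, j))%N%:R + 'C(2 * k, k)%:R
              = 2 ^+ (2 * k) :> R.
  by rewrite -natrX -sum_binomial_upper_half natrD natrM.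
rewrite -signr_odd; case: (odd k) half_k => /=; rewrite ?add1n ?add0n => ->.
- by rewrite big_ltn ?natrD -?upper; [ring | lia].
- by rewrite -upper; ring.
Qed.

Theorem mainTheorem4 (k : nat) (hk : (0 < k)%N) :
  \sum_(i < k.+1) \sum_(t < k.+1 | (k./2 < i + t <= k)%N)
     bernoulli (2 * t) * 2%:R ^+ (2 * t) *
     (trinomial (2 * k + 2) (2 * t) (2 * i + 1) (2 * k - 2 * t - 2 * i + 1))%:R
  = k.+1%:R * (2%:R ^+ (2 * k) - (-1) ^+ k * ('C(2 * k, k))%:R).
Proof.
(* The identity also holds for k = 0. *)
pose h s t := 'C(2 * k + 2, (2 * s).+1)%:R *
              (bernoulli (2 * t) * 2 ^+ (2 * t) * 'C((2 * s).+1, 2 * t)%:R) : rat.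
transitivity (\sum_(i < k.+1) \sum_(t < k.+1 | (k./2 < i + t <= k)%N) h (i + t)%N t).
  apply: eq_bigr => i _; apply: eq_bigr => t /andP[_ le_itk].
  have := trinomial_binomial (2 * t) (2 * i + 1) (2 * k - 2 * t - 2 * i + 1).
  rewrite (_ : 2 * t + (2 * i + 1) = (2 * (i + t)).+1)%N; last by lia.
  rewrite (_ : (2 * (i + t)).+1 + _ = 2 * k + 2)%N; last by lia.
  by move=> ->; rewrite natrM /h; ring.
rewrite (@big_ord_antidiagonal _ k (fun s => k./2 < s <= k)%N h); last by move=> s /andP[].
under eq_bigr => s _.
  rewrite /h -mulr_sumr bernoulli_even_binomial_sum -natrM mulnC.
  rewrite -mul_bin_diag (_ : (2 * k + 2).-1 = (2 * k).+1)%N; last by lia.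
  over.
rewrite -natr_sum -big_distrr /=.
rewrite (eq_bigl (fun s : 'I_k.+1 => k./2 < s)%N); last first.
  by move=> s; rewrite /= -[(s <= k)%N]ltnS ltn_ord andbT.
rewrite -(big_geq_mkord _ _ xpredT (fun s => 'C((2 * k).+1, 2 * s))) natrM.
rewrite (_ : 2 * k + 2 = 2 * k.+1)%N; last by lia.
by rewrite -sum_binomial_odd_row_upper natrM; ring.
Qed.
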